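(* Let $QC$ be an $n$-qubit quantum circuit composed of a sequence of stages, each stage being a $k$-controlled-NOT gate (for various $k\ge 0$) acting on some of the $n$ qubits. Suppose the circuit is affected by a single Pauli fault of type $\sigma_x$ or $\sigma_y$: an unwanted $\sigma_x$ or $\sigma_y$ is applied to one qubit wire at one gate-external error location, i.e. on that wire either before the first stage, between two consecutive stages, or after the last stage. Then for every computational basis input state $|s\rangle$ ($s\in\{0,1\}^n$), measuring the output of the faulty circuit in the computational basis detects the fault: the measured outcome differs from the output $GC|s\rangle$ of the ideal (fault-free) circuit $GC$.
   Context: Pauli matrices: $\sigma_x=|1\rangle\langle 0|+|0\rangle\langle 1|$, $\sigma_y=i|0\rangle\langle 1|-i|1\rangle\langle 0|$, $\sigma_z=|0\rangle\langle 0|-|1\rangle\langle 1|$. A $k$-controlled-NOT ($k$-CN) gate flips its target qubit (applies $\sigma_x$) exactly when all of its $k$ control qubits are in state $|1\rangle$, and acts as the identity otherwise; it is a permutation of computational basis states. The ideal circuit $GC$ is the same network without the fault. A fault is detected by an input if the computational-basis measurement outcome of the faulty circuit differs from that of $GC$ on that input. *)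

(* Quantum states of n qubits are amplitude vectors indexed by
   computational basis states {ffun 'I_n -> bool}, with amplitudes in algC. *)
From HB Require Import structures.
From mathcomp Require Import all_boot all_order all_algebra all_field.
Set Implicit Arguments. Unset Strict Implicit. Unset Printing Implicit Defensive.
Import Order.TTheory GRing.Theory Num.Theory.
Local Open Scope ring_scope.

Definition basis (n : nat) := {ffun 'I_n -> bool}.
Definition qstate (n : nat) := basis n -> algC.

Definition ket n (s : basis n) : qstate n := fun b => (b == s)%:R.

Definition flip n (b : basis n) (w : 'I_n) : basis n :=
  [ffun i => if i == w then ~~ b i else b i].

(* linear operator sending |a> to c a |f a> *)
Definition monomial_op n (f : basis n -> basis n) (c : basis n -> algC)
  (psi : qstate n) : qstate n :=
  fun b => \sum_(a : basis n) (f a == b)%:R * c a * psi a.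

Record cn_gate (n : nat) := CNGate { target : 'I_n; controls : {set 'I_n} }.

Definition well_formed n (g : cn_gate n) : bool := target g \notin controls g.

Definition cn_basis n (g : cn_gate n) (b : basis n) : basis n :=
  if [forall i in controls g, b i] then flip b (target g) else b.

Definition apply_gate n (g : cn_gate n) (psi : qstate n) : qstate n :=
  monomial_op (cn_basis g) (fun _ => 1) psi.

Definition run n (c : seq (cn_gate n)) (psi : qstate n) : qstate n :=
  foldl (fun phi g => apply_gate g phi) psi c.

(* Pauli operators:
   sigma_x = |1><0| + |0><1|,  sigma_y = i|0><1| - i|1><0|  on wire w *)
Inductive pauliXY := PauliX | PauliY.

Definition pauli_coef n (p : pauliXY) (w : 'I_n) (a : basis n) : algC :=
  match p with
  | PauliX => 1
  | PauliY => if a w then 'i else - 'i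
  end.

Definition apply_pauli n (p : pauliXY) (w : 'I_n) (psi : qstate n) : qstate n :=
  monomial_op (fun a => flip a w) (pauli_coef p w) psi.

(* faulty circuit: Pauli p on wire w at location l (0 = before the first stage,
   l = after the l-th stage, size c = after the last stage) *)
Definition run_faulty n (c : seq (cn_gate n)) (l : nat) (p : pauliXY) (w : 'I_n)
  (psi : qstate n) : qstate n :=
  run (drop l c) (apply_pauli p w (run (take l c) psi)).

(* Every k-CN gate permutes the computational basis, so the ideal circuit maps
   |s> to a single basis state, and so does the faulty one: the Pauli fault
   only replaces the intermediate basis state a by a with wire w flipped (up
   to a phase).  The stages after the fault are a bijection of basis states,
   hence they keep the two different intermediate states apart. *)
From HB Require Import structures.
From mathcomp Require Import all_boot all_order all_algebra all_field.
From Stdlib Require Import FunctionalExtensionality.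
Import Order.TTheory GRing.Theory Num.Theory.
Local Open Scope ring_scope.

Section BasisDynamics.

Context {n : nat}.
Implicit Types (c : seq (cn_gate n)) (a b : basis n) (k : algC).

Definition run_basis c a : basis n := foldl (fun b g => cn_basis g b) a c.

Lemma run_basis_take_drop l c a :
  run_basis c a = run_basis (drop l c) (run_basis (take l c) a).
Proof. by rewrite /run_basis -foldl_cat cat_take_drop. Qed.

Lemma flip_neq a (w : 'I_n) : flip a w != a.
Proof. by apply/eqP => /ffunP /(_ w); rewrite ffunE eqxx; case: (a w). Qed.

Lemma flip_id a (w : 'I_n) i : i != w -> flip a w i = a i.
Proof. by rewrite ffunE => /negbTE ->. Qed.

Lemma cn_basis_involutive {g : cn_gate n} :
  well_formed g -> involutive (cn_basis g).
Proof.
move=> wf_g a; rewrite {2}/cn_basis.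
case ctrl_a: [forall i in controls g, a i]; last by rewrite /cn_basis ctrl_a.
have ctrl_flip : [forall i in controls g, flip a (target g) i].
  apply/forall_inP => i i_ctrl; rewrite flip_id; last first.
    by apply: contraNneq wf_g => <-.
  by move/forall_inP: ctrl_a; apply.
apply/ffunP => i; rewrite /cn_basis ctrl_flip !ffunE.
by case: eqP => // ->; rewrite negbK.
Qed.

Lemma run_basis_inj {c} : all (@well_formed n) c -> injective (run_basis c).
Proof.
elim: c => [_ a b //|g c IHc] /= /andP[wf_g wf_c] a b /(IHc wf_c) eq_ab.
by rewrite -(cn_basis_involutive wf_g a) eq_ab cn_basis_involutive.
Qed.

Lemma monomial_op_ket f (cf : basis n -> algC) k a :
  monomial_op f cf (fun x => k * ket a x) = (fun b => k * cf a * ket (f a) b).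
Proof.
apply: functional_extensionality => b; rewrite /monomial_op (bigD1 a) //=.
rewrite big1 ?addr0 => [|x /negbTE x_neq_a]; last by rewrite /ket x_neq_a !mulr0.
rewrite /ket eqxx mulr1 [b == f a]eq_sym.
by case: (f a == b); rewrite ?mul0r ?mulr0 // mul1r mulr1 mulrC.
Qed.

Lemma run_scaled_ket c k a :
  run c (fun x => k * ket a x) = (fun x => k * ket (run_basis c a) x).
Proof.
elim: c k a => [|g c IHc] k a //=.
by rewrite /run /= -/(run c _) /apply_gate monomial_op_ket mulr1 IHc.
Qed.

Lemma ket_scaled a : ket a = (fun x => 1 * ket a x).
Proof. by apply: functional_extensionality => x; rewrite mul1r. Qed.

Lemma run_ket c a : run c (ket a) = ket (run_basis c a).
Proof. by rewrite ket_scaled run_scaled_ket -ket_scaled. Qed.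

Lemma run_faulty_ket c l (p : pauliXY) (w : 'I_n) s :
  let a := run_basis (take l c) s in
  run_faulty c l p w (ket s)
  = (fun x => pauli_coef p w a * ket (run_basis (drop l c) (flip a w)) x).
Proof.
by rewrite /run_faulty run_ket /apply_pauli ket_scaled monomial_op_ket
  mul1r run_scaled_ket.
Qed.

Lemma scaled_ket_neq0 k a b : k * ket a b != 0 -> b = a.
Proof. by rewrite /ket; case: (b =P a) => // _; rewrite mulr0 eqxx. Qed.

Lemma ket_neq0 a b : ket a b != 0 -> b = a.
Proof. by rewrite ket_scaled => /scaled_ket_neq0. Qed.

End BasisDynamics.

Theorem theorem1 (n : nat) (c : seq (cn_gate n)) (p : pauliXY) (w : 'I_n) (l : nat) :
  all (@well_formed n) c -> (l <= size c)%N ->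
  forall (s : basis n) (b b' : basis n),
    run_faulty c l p w (ket s) b != 0 ->
    run c (ket s) b' != 0 ->
    b != b'.
Proof.
move=> wf_c _ s b b'.
rewrite run_faulty_ket run_ket (run_basis_take_drop l c s).
move=> /scaled_ket_neq0 -> /ket_neq0 ->.
have wf_drop : all (@well_formed n) (drop l c).
  by move: wf_c; rewrite -[c in all _ c](cat_take_drop l) all_cat => /andP[].
apply: contra_neq (flip_neq (run_basis (take l c) s) w).
by move/(run_basis_inj wf_drop).
Qed.
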